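(* Let $X$ be a topological space. The following are equivalent: (1) $X$ is a Baire space; (2) every cliquish function $f\colon X\to\mathbb R$ is pointwise discontinuous. Moreover, if $X$ is perfectly normal, (1) and (2) are equivalent to: (3) every function $f\colon X\to\mathbb R$ with the Lebesgue property is pointwise discontinuous.
   Context: A topological space is Baire if every nonempty open subset of it is nonmeager in it. For $f\colon X\to\mathbb R$: $f$ is cliquish if for every $\varepsilon>0$ and every nonempty open $U\subseteq X$ there is a nonempty open $O\subseteq U$ with $\operatorname{diam} f(O)<\varepsilon$; $f$ is pointwise discontinuous if the set of continuity points of $f$ is dense in $X$; $f$ has the Lebesgue property if for every $\varepsilon>0$ there are closed sets $X_n$ ($n\in\mathbb N$) with $X=\bigcup_n X_n$ and $\operatorname{diam} f(X_n)\le\varepsilon$ for all $n$. *)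

From HB Require Import structures.
From mathcomp Require Import all_boot all_order all_algebra.
From mathcomp Require Import all_classical all_reals all_analysis.
From mathcomp Require Import borel_hierarchy.
Set Implicit Arguments.
Unset Strict Implicit.
Unset Printing Implicit Defensive.
Import Order.TTheory GRing.Theory Num.Theory.
Import numFieldNormedType.Exports.
Local Open Scope classical_set_scope.
Local Open Scope ring_scope.

Definition nowhere_dense {T : topologicalType} (A : set T) : Prop :=
  (closure A)° = set0.

Definition meager {T : topologicalType} (A : set T) : Prop :=
  exists2 F : (set T)^nat, (forall n, nowhere_dense (F n)) &
    A `<=` \bigcup_n F n.

Definition Baire_space (T : topologicalType) : Prop :=
  forall U : set T, open U -> U !=set0 -> ~ meager U.

Definition perfectly_normal (T : topologicalType) : Prop :=
  normal_space T /\ forall A : set T, closed A -> Gdelta A.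

Definition diam {R : realType} (A : set R) : \bar R :=
  ereal_sup [set r : \bar R | exists a b, A a /\ A b /\ r = (`|a - b|)%:E].

Definition cliquish {T : topologicalType} {R : realType} (f : T -> R) : Prop :=
  forall (eps : R), 0 < eps -> forall U : set T, open U -> U !=set0 ->
    exists O : set T, [/\ open O, O !=set0, O `<=` U &
      (diam (f @` O) < eps%:E)%E].

Definition pointwise_discontinuous {T : topologicalType} {R : realType}
  (f : T -> R) : Prop :=
  dense [set x : T | {for x, continuous f}].

Definition lebesgue_property {T : topologicalType} {R : realType}
  (f : T -> R) : Prop :=
  forall (eps : R), 0 < eps ->
    exists2 F : (set T)^nat, (forall n, closed (F n)) /\ [set: T] = \bigcup_n F n &
      forall n, (diam (f @` F n) <= eps%:E)%E.

From mathcomp Require Import all_boot all_order all_algebra.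
From mathcomp Require Import all_classical all_reals all_analysis.
From mathcomp Require Import borel_hierarchy.
From mathcomp Require Import lra zify.
Set Implicit Arguments.
Unset Strict Implicit.
Unset Printing Implicit Defensive.
Import Order.TTheory GRing.Theory Num.Theory.
Import numFieldNormedType.Exports.
Local Open Scope classical_set_scope.
Local Open Scope ring_scope.

(* The continuity points of a cliquish [f] form the countable intersection of the
   open sets [osc_lt f (1/(n+1))], each dense by cliquishness, hence a dense set
   when the space is Baire. A function with the Lebesgue property is cliquish in a Baire
   space: inside any open [U] one of the closed pieces [F n] of an [e/2]-cover is
   dense in some open subset.
   Conversely, if a nonempty open [U] is covered by closed nowhere dense sets [K n],
   the function equal to [1/(m+1)] on [K m] minus the earlier [K i] and to [0]
   elsewhere is cliquish but discontinuous at every point of [U]. When closed sets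
   are G_delta, the complements of [K 0 `|` ... `|` K (k-1)] are F_sigma, which makes
   this function have the Lebesgue property too. *)

Section diam.
Variable R : realType.
Implicit Types A B : set R.

Lemma dist_le_diam A a b : A a -> A b -> (`|a - b|%:E <= diam A)%E.
Proof. by move=> Aa Ab; apply: ereal_sup_ubound; exists a, b. Qed.

Lemma diam_le A (r : R) :
  (forall a b, A a -> A b -> `|a - b| <= r) -> (diam A <= r%:E)%E.
Proof.
by move=> Ar; apply: ge_ereal_sup => _ [a [b [Aa [Ab ->]]]]; rewrite lee_fin Ar.
Qed.

Lemma le_diam A B : A `<=` B -> (diam A <= diam B)%E.
Proof.
move=> AB; apply: ereal_sup_le => _ [a [b [Aa [Ab ->]]]].
by exists a, b; split; [exact: AB | split; [exact: AB |]].
Qed.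

End diam.

Lemma exists_natSinv_lt (R : realType) (e : R) : 0 < e ->
  exists n : nat, n.+1%:R^-1 < e.
Proof.
by move=> e0; exists (Num.truncn e^-1); rewrite invf_plt ?unfold_in //= truncnS_gt.
Qed.

Lemma normB_le (R : realDomainType) (a b c : R) :
  0 <= a <= c -> 0 <= b <= c -> `|a - b| <= c.
Proof. by move=> /andP[a0 ac] /andP[b0 bc]; rewrite ler_norml; apply/andP; split; lra. Qed.

Section topology.
Variable T : topologicalType.

Lemma continuous_atP (R : realType) (f : T -> R) x :
  {for x, continuous f} <->
  forall e : R, 0 < e ->
    exists V, [/\ open V, V x & forall y, V y -> `|f x - f y| < e].
Proof.
split=> [/cvgrPdist_lt fx e e0 | fx].
  have := fx e e0; rewrite nbhsE => -[V [oV Vx] Vf].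
  by exists V; split => // y /Vf.
apply/cvgrPdist_lt => e e0; have [V [oV Vx Vf]] := fx e e0.
by apply: filterS (open_nbhs_nbhs (conj oV Vx)) => y /Vf.
Qed.

Lemma nowhere_dense_closedE (K : set T) : closed K -> nowhere_dense K <-> K° = set0.
Proof. by move=> /closure_id KE; rewrite /nowhere_dense -KE. Qed.

Lemma open_setIC_nonempty (W K : set T) : open W -> W !=set0 -> K° = set0 ->
  (W `&` ~` K) !=set0.
Proof.
move=> oW [w Ww] K0; apply/set0P/eqP => WK0.
have WK : W `<=` K.
  by move=> x Wx; apply/not_notP => Kx; have : (W `&` ~` K) x by []; rewrite WK0.
by have := interiorS WK; rewrite K0 (proj1 (interior_id W) oW) => /(_ w Ww).
Qed.

Lemma Fsigma_open : (forall A : set T, closed A -> Gdelta A) ->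
  forall U : set T, open U -> Fsigma U.
Proof.
move=> closed_Gdelta U oU.
have [G oG UG] := closed_Gdelta (~` U) (open_closedC oU).
exists (fun i => ~` G i) => [i|]; first exact: open_closedC.
by rewrite -[U]setCK UG setC_bigcap.
Qed.

Lemma Fsigma_closedI (K U : set T) : closed K -> Fsigma U -> Fsigma (K `&` U).
Proof.
move=> cK [F cF ->]; exists (fun i => K `&` F i); last exact: setI_bigcupr.
by move=> i; apply: closedI.
Qed.

End topology.

Section oscillation.
Variables (T : topologicalType) (R : realType) (f : T -> R).

Definition osc_lt (e : R) : set T :=
  [set x | exists V, [/\ open V, V x & (diam (f @` V) < e%:E)%E]].

Lemma open_osc_lt e : open (osc_lt e).
Proof.
rewrite openE => x [V [oV Vx fV]].
by apply: filterS (open_nbhs_nbhs (conj oV Vx)) => y Vy; exists V.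
Qed.

Lemma cliquish_nowhere_dense_osc_ge e : cliquish f -> 0 < e ->
  nowhere_dense (~` osc_lt e).
Proof.
move=> fcl e0; apply/nowhere_dense_closedE; first exact/open_closedC/open_osc_lt.
apply/seteqP; split => // z; rewrite /interior nbhsE => -[B [oB Bz] BS].
have [W [oW [w Ww] WB fW]] := fcl e e0 B oB (ex_intro _ z Bz).
by apply: (BS w (WB w Ww)); exists W.
Qed.

Lemma continuous_at_osc_lt x : (forall n, osc_lt n.+1%:R^-1 x) ->
  {for x, continuous f}.
Proof.
move=> xosc; apply/continuous_atP => e e0.
have [n ne] := exists_natSinv_lt e0.
have [V [oV Vx fV]] := xosc n.
exists V; split => // y Vy; apply: lt_trans ne; rewrite -lte_fin.
by apply: le_lt_trans fV; apply: dist_le_diam; [exists x | exists y].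
Qed.

Lemma Baire_cliquish_pointwise_discontinuous :
  Baire_space T -> cliquish f -> pointwise_discontinuous f.
Proof.
move=> TB fcl U U0 oU; apply/set0P/eqP => Ucont.
apply: (TB U oU U0); exists (fun n => ~` osc_lt n.+1%:R^-1).
  by move=> n; apply: cliquish_nowhere_dense_osc_ge.
move=> x Ux; apply/not_notP => xosc.
have xcont : {for x, continuous f}.
  by apply: continuous_at_osc_lt => n; apply/not_notP => ?; apply: xosc; exists n.
by have : (U `&` [set x | {for x, continuous f}]) x by []; rewrite Ucont.
Qed.

End oscillation.

Lemma Baire_somewhere_dense (T : topologicalType) (F : (set T)^nat) (U : set T) :
  Baire_space T -> open U -> U !=set0 -> U `<=` \bigcup_n F n ->
  exists n, (closure (U `&` F n))° !=set0.
Proof.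
move=> TB oU U0 UF; apply/not_notP => Fnd; apply: (TB U oU U0).
exists (fun n => U `&` F n).
  move=> n; apply/eqP/negPn/negP => /set0P ne; apply: Fnd; exists n; exact: ne.
by move=> x Ux; have [n _ Fx] := UF x Ux; exists n.
Qed.

Lemma Baire_lebesgue_cliquish (T : topologicalType) (R : realType) (f : T -> R) :
  Baire_space T -> lebesgue_property f -> cliquish f.
Proof.
move=> TB flp e e0 U oU U0.
have [F [cF FT] fF] := flp (e / 2) (divr_gt0 e0 (ltr0Sn _ 1)).
have [n [z]] : exists n, (closure (U `&` F n))° !=set0.
  by apply: Baire_somewhere_dense => // x _; rewrite -FT.
rewrite /interior nbhsE => -[B [oB Bz] BUF].
have BF : B `<=` F n.
  rewrite [X in _ `<=` X](closure_id _).1 //.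
  by move=> x /BUF; apply: closureS => y [].
exists (B `&` U); split => //; first exact: openI.
- have [w [[Uw _] Bw]] := BUF z Bz B (open_nbhs_nbhs (conj oB Bz)).
  by exists w.
- apply: le_lt_trans (le_diam (image_subset f (subIset (or_introl BF)))) _.
  by apply: le_lt_trans (fF n) _; rewrite lte_fin ltr_pdivrMr // ltr_pMr // ltr1n.
Qed.

Section layer_function.
Variables (T : topologicalType) (R : realType) (K : (set T)^nat).

Definition outside_layers (k : nat) : set T :=
  [set x | forall i, (i < k)%N -> ~ K i x].

Definition layer_fun (x : T) : R :=
  match pselect (exists n, `[< K n x >]) with
  | left xK => (ex_minn xK).+1%:R^-1
  | right _ => 0
  end.

Lemma outside_layersS k : outside_layers k.+1 = outside_layers k `&` ~` K k.
Proof.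
apply/seteqP; split => x.
  by move=> xk; split => [i ik|]; apply: xk; lia.
by move=> [xk xKk] i; rewrite ltnS leq_eqVlt => /orP[/eqP -> // | /xk].
Qed.

Lemma exists_first_layer x : (exists n, K n x) ->
  exists m, K m x /\ outside_layers m x.
Proof.
move=> [n Knx]; have xK : exists n, `[< K n x >] by exists n; apply/asboolP.
case: (ex_minnP xK) => m /asboolP Kmx m_min; exists m; split => // i im Kix.
by have := m_min i (asboolT Kix); lia.
Qed.

Lemma layer_funE x n : K n x -> outside_layers n x -> layer_fun x = n.+1%:R^-1.
Proof.
move=> Knx xn; rewrite /layer_fun; case: pselect => [xK|]; last first.
  by move=> xK; exfalso; apply: xK; exists n; apply/asboolP.
case: ex_minnP => m /asboolP Kmx m_min.
have mn : (m <= n)%N by apply/m_min/asboolP.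
have nm : (n <= m)%N by rewrite leqNgt; apply/negP => /xn.
by have -> : m = n by apply/eqP; rewrite eqn_leq mn nm.
Qed.

Lemma layer_fun_bounds x k : outside_layers k x -> 0 <= layer_fun x <= k.+1%:R^-1.
Proof.
move=> xk; rewrite /layer_fun; case: pselect => [xK|_]; last by rewrite lexx invr_ge0 ler0n.
case: ex_minnP => m /asboolP Kmx _.
have km : (k <= m)%N by rewrite leqNgt; apply/negP => /xk.
by rewrite invr_ge0 ler0n /= lef_pV2 ?posrE ?ltr0n // ler_nat.
Qed.

Hypothesis closedK : forall n, closed (K n).

Lemma open_outside_layers k : open (outside_layers k).
Proof.
elim: k => [|k IHk].
  have -> : outside_layers 0 = setT by apply/seteqP; split => // x _ i.
  exact: openT.
by rewrite outside_layersS; apply: openI => //; apply: closed_openC.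
Qed.

Hypothesis nowhere_denseK : forall n, nowhere_dense (K n).

Lemma outside_layers_meets_open k (W : set T) : open W -> W !=set0 ->
  (W `&` outside_layers k) !=set0.
Proof.
move=> oW; elim: k => [[w Ww]|k IHk W0]; first by exists w.
rewrite outside_layersS setIA; apply: open_setIC_nonempty _ (IHk W0) _.
  exact/openI/open_outside_layers.
exact/nowhere_dense_closedE.
Qed.

Lemma layer_fun_cliquish : cliquish layer_fun.
Proof.
move=> e e0 W oW W0; have [k ke] := exists_natSinv_lt e0.
exists (W `&` outside_layers k); split => //.
- exact/openI/open_outside_layers.
- exact: outside_layers_meets_open.
- apply: le_lt_trans (_ : (k.+1%:R^-1)%:E < e%:E)%E; last by rewrite lte_fin.
  apply: diam_le => _ _ [a [_ ak] <-] [b [_ bk] <-].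
  by apply: normB_le; apply: layer_fun_bounds.
Qed.

(* Near a point of the layer [K m] there are points outside the first [2m+2] layers,
   where [layer_fun] is below half its value at that point. *)
Lemma layer_fun_discontinuous x : (exists n, K n x) -> ~ {for x, continuous layer_fun}.
Proof.
move=> /exists_first_layer[m [Kmx xm]] /continuous_atP xcont.
have [|V [oV Vx Vf]] := xcont (m.+1%:R^-1 / 2); first by rewrite divr_gt0.
have [y [Vy ym]] := outside_layers_meets_open (m.+1 * 2) oV (ex_intro _ x Vx).
have /andP[_ fy] := layer_fun_bounds ym.
have half_lt : ((m.+1 * 2).+1%:R^-1 : R) < m.+1%:R^-1 / 2.
  by rewrite -[2 : R]/(2%:R) -invfM -natrM ltf_pV2 ?posrE ?ltr0n // ltr_nat; lia.
have := ltrD (le_lt_trans (ler_norm _) (Vf y Vy)) (le_lt_trans fy half_lt).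
by rewrite (layer_funE Kmx xm) subrK -splitr ltxx.
Qed.

End layer_function.

Lemma lebesgue_property_Fsigma (T : topologicalType) (R : realType) (f : T -> R) :
  (forall e : R, 0 < e -> exists2 P : (set T)^nat,
     (forall k, Fsigma (P k)) /\ [set: T] = \bigcup_k P k &
     forall k, (diam (f @` P k) <= e%:E)%E) ->
  lebesgue_property f.
Proof.
move=> fP e e0; have [P [PF PT] fPe] := fP e e0.
have PA k : exists A : (set T)^nat, (forall j, closed (A j)) /\ P k = \bigcup_j A j.
  by have [A cA ->] := PF k; exists A.
have [A kA] := choice PA.
pose G n : set T := if @unpickle (nat * nat)%type n is Some (k, j) then A k j else set0.
have GP n : exists k, G n `<=` P k.
  rewrite /G; case: unpickle => [[k j]|]; last by exists 0%N.
  by exists k; rewrite (proj2 (kA k)); exact: bigcup_sup.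
exists G; first split.
- move=> n; rewrite /G; case: unpickle => [[k j]|]; last exact: closed0.
  exact: (proj1 (kA k)).
- apply/seteqP; split => // x _; move: (I : setT x); rewrite PT => -[k _].
  rewrite (proj2 (kA k)) => -[j _ Akjx].
  by exists (pickle (k, j)) => //; rewrite /G pickleK.
- move=> n; have [k GPk] := GP n.
  exact: le_trans (le_diam (image_subset f GPk)) (fPe k).
Qed.

Lemma layer_fun_lebesgue (T : topologicalType) (R : realType) (K : (set T)^nat) :
  (forall A : set T, closed A -> Gdelta A) -> (forall n, closed (K n)) ->
  lebesgue_property (layer_fun R K).
Proof.
move=> closed_Gdelta closedK; apply: lebesgue_property_Fsigma => e e0.
have [m me] := exists_natSinv_lt e0.
have Fsigma_outside k := Fsigma_open closed_Gdelta (open_outside_layers closedK k).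
(* Off the first [m] layers [layer_fun] is at most [1/(m+1)]; on each of them it is constant. *)
exists (fun k => if (k < m)%N then K k `&` outside_layers K k else outside_layers K m).
  split=> [k|]; first by case: ifP => _; [exact: Fsigma_closedI | exact: Fsigma_outside].
  apply/seteqP; split => // x _.
  have [xm|xm] := pselect (outside_layers K m x); first by exists m; rewrite // ltnn.
  have [i [im Kix]] : exists i, (i < m)%N /\ K i x.
    by apply/not_notP => xK; apply: xm => i im Kix; apply: xK; exists i.
  have [i0 [Ki0x xi0]] := exists_first_layer (ex_intro _ i Kix).
  have i0m : (i0 < m)%N by rewrite ltnNge; apply/negP => mi0; apply: (xi0 i) => //; lia.
  by exists i0 => //; rewrite i0m.
move=> k; apply: diam_le => _ _ [a Pa <-] [b Pb <-]; move: Pa Pb.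
case: ifP => _ => [[Kka ak] [Kkb bk]|am bm].
  by rewrite (layer_funE R Kka ak) (layer_funE R Kkb bk) subrr normr0 ltW.
by apply: le_trans (ltW me); apply: normB_le; apply: (layer_fun_bounds R).
Qed.

Lemma Baire_of_layer_funs (T : topologicalType) (R : realType) (P : (T -> R) -> Prop) :
  (forall K : (set T)^nat, (forall n, closed (K n)) ->
     (forall n, nowhere_dense (K n)) -> P (layer_fun R K)) ->
  (forall f : T -> R, P f -> pointwise_discontinuous f) -> Baire_space T.
Proof.
move=> PK Pcont U oU U0 [F Fnd UF].
pose K n := closure (F n).
have closedK n : closed (K n) by exact: closed_closure.
have ndK n : nowhere_dense (K n) by apply/nowhere_dense_closedE; [exact: closedK | exact: Fnd].
have [x [Ux xcont]] := Pcont _ (PK K closedK ndK) U U0 oU.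
apply: (layer_fun_discontinuous closedK ndK _ xcont).
by have [n _ Fnx] := UF x Ux; exists n; exact: subset_closure.
Qed.

Theorem proposition2p8 (R : realType) (X : topologicalType) :
  (Baire_space X <->
     forall f : X -> R, cliquish f -> pointwise_discontinuous f) /\
  (perfectly_normal X ->
     (Baire_space X <->
        forall f : X -> R, lebesgue_property f -> pointwise_discontinuous f)).
Proof.
split; first split.
- by move=> XB f; exact: Baire_cliquish_pointwise_discontinuous.
- by apply: Baire_of_layer_funs => K closedK ndK; exact: layer_fun_cliquish.
move=> [_ closed_Gdelta]; split.
- move=> XB f flp; apply: Baire_cliquish_pointwise_discontinuous => //.
  exact: Baire_lebesgue_cliquish.
- by apply: Baire_of_layer_funs => K closedK _; exact: layer_fun_lebesgue.
Qed.
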